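(* Let $G=(V,E)$ be a graph whose edge set can be decomposed into the edge set of a spanning bipartite subgraph $H'$ of $G$ with no connected component consisting of a single edge and a set $M'$ of edges forming a matching. Then $G$ admits a partial edge colouring with $16$ colours such that all edges of $G$ are satisfied.
   Context: For an edge $e=uv$, $E[e]$ is the set of edges incident with $u$ or $v$ and $E(e)=E[e]\setminus\{e\}$. In a partial edge colouring (not all edges need be coloured), a colour $\alpha$ is unique for $e$ if $\alpha$ appears on some edge $e'\in E(e)$ and on no other edge of $E[e]\setminus\{e'\}$; $e$ is satisfied if such a colour exists. ''Spanning'' means $V(H')=V$; here $H'$ is assumed to have no isolated vertices (every vertex of $V$ lies in a component of $H'$ with at least two edges). *)

From mathcomp Require Import all_boot.
Set Implicit Arguments. Unset Strict Implicit. Unset Printing Implicit Defensive.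

Section Defs.
Variable T : finType.

Definition simple_graph (g : rel T) : Prop := symmetric g /\ irreflexive g.

Definition edges (g : rel T) : {set {set T}} :=
  [set [set x; y] | x in T, y in T & g x y].

Definition Eclosed (g : rel T) (a : {set T}) : {set {set T}} :=
  [set f in edges g | f :&: a != set0].
Definition Eopen (g : rel T) (a : {set T}) : {set {set T}} := Eclosed g a :\ a.

Definition pcolouring (k : nat) := {set T} -> option 'I_k.

Definition unique_colour (g : rel T) k (c : pcolouring k) (a : {set T}) (al : 'I_k) : Prop :=
  exists2 a', a' \in Eopen g a &
    c a' = Some al /\ (forall a'', a'' \in Eclosed g a :\ a' -> c a'' <> Some al).

Definition satisfied (g : rel T) k (c : pcolouring k) (a : {set T}) : Prop :=
  exists al, unique_colour g c a al.

Definition matching (M : {set {set T}}) : Prop :=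
  forall a b, a \in M -> b \in M -> a != b -> a :&: b = set0.

Definition bipartite_edges (H : {set {set T}}) : Prop :=
  exists col : T -> bool, forall x y, [set x; y] \in H -> col x != col y.

Definition adjH (H : {set {set T}}) : rel T := fun x y => [set x; y] \in H.

(* spanning, no isolated vertices and no single-edge component: every vertex
   lies in a component of H (w.r.t. connectivity in H) containing at least two edges *)
Definition spanning_no_K2_component (H : {set {set T}}) : Prop :=
  forall v : T, exists a b : {set T}, [/\ a \in H, b \in H, a != b &
     (exists2 x, x \in a & connect (adjH H) v x) /\
     (exists2 y, y \in b & connect (adjH H) v y)].
End Defs.

From mathcomp Require Import all_boot zify.
Set Implicit Arguments. Unset Strict Implicit. Unset Printing Implicit Defensive.

(* In each component of H fix a vertex of degree at least 2 (an anchor: one exists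
   because no component is a single edge) and grow a breadth-first forest from the
   anchors. As H is bipartite, the ends of every H-edge lie in consecutive layers.
   Only forest edges are coloured: the edge from a vertex x to its parent gets the
   colour 2 (depth x mod 3) + m x, where m is a 2-colouring of the vertices separating
   the ends of every matching edge; the two chosen children of an anchor use instead a
   separate palette of 8 colours recording which child they are and the m-values of
   both ends. An edge uv is then satisfied by the forest edge at u (at a chosen child
   of u when u is an anchor, swapping u and v if needed): no other forest edge meeting
   u or v has that colour. *)

Section Edges.
Variable T : finType.

Lemma set2_eq_cases (x y x' y' : T) : [set x; y] = [set x'; y'] ->
  (x = x' /\ y = y') \/ (x = y' /\ y = x').
Proof.
move=> E.
have /set2P hx : x \in [set x'; y'] by rewrite -E set21.
have /set2P hy : y \in [set x'; y'] by rewrite -E set22.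
have /set2P hx' : x' \in [set x; y] by rewrite E set21.
have /set2P hy' : y' \in [set x; y] by rewrite E set22.
by case: hx hy hx' hy' => -> [] -> [] ? [] ?; subst; auto.
Qed.

Lemma adjH_sym (H : {set {set T}}) : symmetric (adjH H).
Proof. by move=> x y; rewrite /adjH setUC. Qed.

Variable g : rel T.

Lemma edgesP e : reflect (exists x y, g x y /\ e = [set x; y]) (e \in edges g).
Proof.
apply: (iffP imset2P) => [[x y _]|[x [y [gxy ->]]]].
  by rewrite inE => gxy ->; exists x, y.
by apply: (Imset2spec (x1 := x) (x2 := y)); rewrite ?inE.
Qed.

Lemma edges_mem e x : e \in edges g -> x \in e -> exists y, e = [set x; y].
Proof.
case/edgesP=> u [v [_ ->]] /set2P[] ->; first by exists v.
by exists u; rewrite setUC.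
Qed.

Hypothesis g_sym : symmetric g.

Lemma edges_rel x y : [set x; y] \in edges g -> g x y.
Proof.
by case/edgesP=> x' [y' [gxy /set2_eq_cases]] [[-> ->]|[-> ->]]; rewrite // g_sym.
Qed.

Lemma adjH_sub (H : {set {set T}}) : {subset H <= edges g} -> subrel (adjH H) g.
Proof. by move=> sub x y /sub/edges_rel. Qed.

End Edges.

Lemma matching_two_colouring (T : finType) (M : {set {set T}}) : matching M ->
  exists m : T -> bool, forall x y, [set x; y] \in M -> x != y -> m x != m y.
Proof.
move=> Mm.
pose m x := [exists y, ([set x; y] \in M) && (enum_rank x < enum_rank y)].
have lower x y : [set x; y] \in M -> enum_rank x < enum_rank y -> m x && ~~ m y.
  move=> Mxy lt; apply/andP; split; first by apply/existsP; exists y; rewrite Mxy.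
  apply/existsP=> -[z /andP[Myz lt2]].
  have [/set2_eq_cases[[E _]|[E _]]|neq] := eqVneq [set x; y] [set y; z].
  - by move: lt; rewrite E ltnn.
  - by move: (ltn_trans lt lt2); rewrite E ltnn.
  by have /setP/(_ y) := Mm _ _ Mxy Myz neq; rewrite !inE eqxx orbT.
exists m => x y Mxy nxy.
have : enum_rank x != enum_rank y by apply: contra nxy => /eqP/enum_rank_inj ->.
rewrite neq_ltn => /orP[] lt.
  by case/andP: (lower _ _ Mxy lt) => -> /negbTE ->.
by rewrite setUC in Mxy; case/andP: (lower _ _ Mxy lt) => -> /negbTE ->.
Qed.

Section RootedLayering.
Variables (T : finType) (g : rel T) (H : {set {set T}}) (a : T -> bool).
Hypothesis g_sym : symmetric g.
Hypothesis g_irr : irreflexive g.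
Hypothesis H_sub : {subset H <= edges g}.
Hypothesis H_bip : forall x y, [set x; y] \in H -> a x != a y.
Hypothesis H_span : spanning_no_K2_component H.

Local Notation h := (adjH H).

Let h_connect_sym : connect_sym h := sym_connect_sym (@adjH_sym T H).

Lemma adjH_irr : irreflexive h.
Proof. by move=> x; apply/negP => /(adjH_sub g_sym H_sub); rewrite g_irr. Qed.

Lemma adjH_pair e x : e \in H -> x \in e -> exists2 y, e = [set x; y] & h x y.
Proof.
by move=> He xe; have [y Exy] := edges_mem (H_sub He) xe; exists y; rewrite // /adjH -Exy.
Qed.

Definition branching w := [exists yz : T * T, [&& yz.1 != yz.2, h w yz.1 & h w yz.2]].

Lemma connect_branching v : exists w, connect h v w && branching w.
Proof.
apply/existsP; apply: contraT => /existsPn no_branch.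
have unique_nb w y z : connect h v w -> h w y -> h w z -> y = z.
  move=> vw wy wz; apply/eqP/negPn/negP => yz; move/negP: (no_branch w); apply.
  by rewrite vw; apply/existsP; exists (y, z); rewrite /= yz wy wz.
(* Then the component of [v] is a single edge, whereas [H_span] provides two. *)
have [e [f [He Hf nef [[x xe vx] [y yf vy]]]]] := H_span v.
have [x' Ee hxx'] := adjH_pair He xe; have [y' Ef hyy'] := adjH_pair Hf yf.
have vx' : connect h v x' := connect_trans vx (connect1 hxx').
have closed_e : closed h [set x; x'].
  apply: (intro_closed h_connect_sym) => w z hwz /set2P[] Ew; subst w.
    by rewrite -(unique_nb _ _ _ vx hxx' hwz) set22.
  by rewrite -(unique_nb x' x z) ?set21 // adjH_sym.
have xy : connect h x y by apply: connect_trans vy; rewrite h_connect_sym.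
have ye : y \in [set x; x'] by rewrite -(closed_connect closed_e xy) set21.
have y'e : y' \in [set x; x'] by rewrite -(closed_connect closed_e (connect1 hyy')) ye.
have nyy' : y != y' by apply: contraTneq hyy' => ->; rewrite adjH_irr.
move: ye y'e nyy' nef; rewrite Ee Ef !inE.
by case/orP=> /eqP-> /orP[]/eqP->; rewrite ?eqxx // => _; rewrite setUC eqxx.
Qed.

(* Picking relative to [root h v] makes the anchor depend only on the component of [v]. *)
Definition anchor v := odflt (root h v) [pick w | connect h (root h v) w && branching w].

Lemma connect_anchor v : connect h v (anchor v).
Proof.
have v_root : connect h v (root h v) := connect_root h v.
by rewrite /anchor; case: pickP => [w /andP[rw _]|_] //=; apply: connect_trans rw.
Qed.

Lemma anchor_connect v w : connect h v w -> anchor v = anchor w.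
Proof. by move/(rootP h_connect_sym); rewrite /anchor => ->. Qed.

Lemma anchor_id v : anchor (anchor v) = anchor v.
Proof. by rewrite -(anchor_connect (connect_anchor v)). Qed.

Lemma branching_anchor v : branching (anchor v).
Proof.
rewrite /anchor; case: pickP => [w /andP[_ ->] //|none].
have [w /andP[vw bw]] := connect_branching v.
by have := none w; rewrite bw (connect_trans _ vw) // h_connect_sym connect_root.
Qed.

Fixpoint ball k : {set T} :=
  if k is k'.+1 then ball k' :|: [set y | [exists x in ball k', h x y]]
  else [set x | anchor x == x].

Lemma ball_adj k x y : x \in ball k -> h x y -> y \in ball k.+1.
Proof.
by move=> xk hxy; rewrite /= !inE; apply/orP; right; apply/existsP; exists x; rewrite xk.
Qed.

Lemma ball_path k x s : x \in ball k -> path h x s -> last x s \in ball (k + size s).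
Proof.
elim: s x k => [|y s IH] x k xk /=; first by rewrite addn0.
by case/andP=> hxy hs; rewrite addnS -addSn; apply: IH hs; apply: ball_adj hxy.
Qed.

Lemma in_some_ball v : exists k, v \in ball k.
Proof.
have : connect h (anchor v) v by rewrite h_connect_sym connect_anchor.
case/connectP=> s hs ->; exists (0 + size s); apply: ball_path hs.
by rewrite inE anchor_id.
Qed.

Definition depth v := ex_minn (in_some_ball v).

Lemma depth_ball v : v \in ball (depth v).
Proof. by rewrite /depth; case: ex_minnP. Qed.

Lemma depth_min v k : v \in ball k -> depth v <= k.
Proof. by rewrite /depth; case: ex_minnP => n _ nmin /nmin. Qed.

Lemma depth_eq0 v : (depth v == 0) = (anchor v == v).
Proof.
apply/idP/idP => [/eqP d0 | av].
  by have := depth_ball v; rewrite d0 inE.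
by rewrite -leqn0; apply: depth_min; rewrite inE.
Qed.

Lemma depth0_anchor r : depth r = 0 -> anchor r = r.
Proof. by move/eqP; rewrite depth_eq0 => /eqP. Qed.

Lemma depth_adj u v : h u v -> depth v <= (depth u).+1.
Proof. by move=> huv; apply/depth_min/(ball_adj (depth_ball u) huv). Qed.

Lemma depth_pred v : 0 < depth v -> exists2 x, h x v & (depth x).+1 = depth v.
Proof.
move=> dv; have := depth_ball v; case E: (depth v) dv => [|k] // _ /=.
rewrite !inE => /orP[/depth_min|/existsP[x /andP[xk hxv]]]; first by rewrite E ltnn.
exists x => //; have := depth_min xk; have := depth_adj hxv; rewrite E; lia.
Qed.

Lemma depth_parity v : odd (depth v) = (a v != a (anchor v)).
Proof.
move Dk: (depth v) => k; elim: k v Dk => [|k IH] v dv.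
  by rewrite depth0_anchor // eqxx.
have [x hxv dx] : exists2 x, h x v & (depth x).+1 = depth v.
  by apply: depth_pred; rewrite dv.
rewrite /= (IH x) -?(anchor_connect (connect1 hxv)); last by move: dx; rewrite dv => -[].
by have := H_bip hxv; case: (a x); case: (a v); case: (a (anchor x)).
Qed.

Lemma depth_step u v : h u v -> depth v = (depth u).+1 \/ depth u = (depth v).+1.
Proof.
move=> huv; have hvu : h v u by rewrite adjH_sym.
have : depth u != depth v.
  apply/eqP => duv; have := depth_parity u; rewrite duv depth_parity.
  rewrite (anchor_connect (connect1 huv)); have := H_bip huv.
  by case: (a u); case: (a v); case: (a (anchor v)).
by have := depth_adj huv; have := depth_adj hvu; lia.
Qed.

Definition parent x := odflt x [pick y | h y x && ((depth y).+1 == depth x)].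

Lemma parent_spec x :
  0 < depth x -> h (parent x) x /\ depth x = (depth (parent x)).+1.
Proof.
rewrite /parent => dx; case: pickP => [y /andP[hyx /eqP <-] //|none].
by have [y hyx dy] := depth_pred dx; have := none y; rewrite hyx dy eqxx.
Qed.

Lemma parent_adj x : 0 < depth x -> h (parent x) x.
Proof. by case/parent_spec. Qed.

Lemma depth_parent x : 0 < depth x -> depth x = (depth (parent x)).+1.
Proof. by case/parent_spec. Qed.

Lemma parent_anchor_nb r y : depth r = 0 -> h r y -> 0 < depth y /\ parent y = r.
Proof.
move=> dr hry; have dy : 0 < depth y by case: (depth_step hry); rewrite dr; lia.
split=> //; have [hpy dpy] := parent_spec dy.
have : depth (parent y) == 0 by case: (depth_step hry); rewrite dr dpy; lia.
rewrite depth_eq0 => /eqP <-; rewrite -(depth0_anchor dr).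
by rewrite (anchor_connect (connect1 hpy)) (anchor_connect (connect1 hry)).
Qed.

Definition child (b : bool) r :=
  if [pick yz : T * T | [&& yz.1 != yz.2, h r yz.1 & h r yz.2]] is Some yz
  then (if b then yz.2 else yz.1) else r.

Lemma child_spec r : branching r ->
  [/\ h r (child false r), h r (child true r) & child false r != child true r].
Proof.
rewrite /child => /existsP[yz yzP].
by case: pickP => [[y z] /and3P[] //|/(_ yz)]; rewrite yzP.
Qed.

Lemma anchor_children r b :
  depth r = 0 -> 0 < depth (child b r) /\ parent (child b r) = r.
Proof.
move=> dr; have : branching r by rewrite -(depth0_anchor dr) branching_anchor.
by case/child_spec; case: b => *; apply: parent_anchor_nb.
Qed.

Lemma anchor_children_neq r : depth r = 0 -> child false r != child true r.
Proof.
by move/depth0_anchor <-; case/child_spec: (branching_anchor r).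
Qed.

End RootedLayering.

Section LayeredColouring.
Variables (T : finType) (g h : rel T) (m : T -> bool) (d : T -> nat) (p : T -> T).
Variable s : bool -> T -> T.
Hypothesis g_irr : irreflexive g.
Hypothesis h_sub : subrel h g.
Hypothesis h_step : forall x y, h x y -> d y = (d x).+1 \/ d x = (d y).+1.
Hypothesis h_parent : forall x, 0 < d x -> h (p x) x.
Hypothesis d_parent : forall x, 0 < d x -> d x = (d (p x)).+1.
Hypothesis root_children : forall r b, d r = 0 -> 0 < d (s b r) /\ p (s b r) = r.
Hypothesis root_children_neq : forall r, d r = 0 -> s false r != s true r.

Definition special x := (d x == 1) && ((x == s false (p x)) || (x == s true (p x))).

Definition child_tag x := x == s true (p x).

Definition kappa x : nat :=
  if special x then 6 + 4 * child_tag x + 2 * m (p x) + m x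
  else 2 * (d x %% 3) + m x.

Definition tree_colouring : pcolouring T 16 := fun e =>
  if [pick x | (0 < d x) && (e == [set x; p x])] is Some x
  then Some (inord (kappa x)) else None.

Lemma kappa_lt x : kappa x < 16.
Proof. rewrite /kappa; case: ifP => _; have := ltn_pmod (d x) (isT : 0 < 3); lia. Qed.

Lemma kappa_ordinary x : ~~ special x -> kappa x = 2 * (d x %% 3) + m x.
Proof. by rewrite /kappa => /negbTE ->. Qed.

Lemma kappa_ordinary_special x y : ~~ special x -> special y -> kappa x != kappa y.
Proof.
move=> /kappa_ordinary -> sy; rewrite /kappa sy.
have := ltn_pmod (d x) (isT : 0 < 3); lia.
Qed.

Lemma kappa_special_neq x y : special x -> special y ->
  [|| child_tag x != child_tag y, m (p x) != m (p y) | m x != m y] -> kappa x != kappa y.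
Proof.
rewrite /kappa => -> ->.
by case: (child_tag x) (child_tag y) (m (p x)) (m (p y)) (m x) (m y) => [] [] [] [] [] [].
Qed.

Lemma kappa_neq_special x y : special y ->
  (special x -> [|| child_tag x != child_tag y, m (p x) != m (p y) | m x != m y]) ->
  kappa x != kappa y.
Proof.
move=> sy diff; have [sx|sx] := boolP (special x).
  exact: kappa_special_neq (diff sx).
exact: kappa_ordinary_special.
Qed.

Lemma special_depth x : special x -> d x = 1.
Proof. by case/andP=> /eqP. Qed.

Lemma not_special_child x : 0 < d x -> 0 < d (p x) -> ~~ special x.
Proof. by move=> dx dpx; apply/negP => /special_depth; have := d_parent dx; lia. Qed.

Lemma special_root_child r b : d r = 0 -> special (s b r) /\ child_tag (s b r) = b.
Proof.
move=> dr; have [ds ps] := root_children b dr.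
have d1 : d (s b r) = 1 by have := d_parent ds; rewrite ps dr.
rewrite /special /child_tag ps d1 /=; have := root_children_neq dr.
by clear ds ps d1; case: b => [_|/negbTE ->]; rewrite eqxx ?orbT.
Qed.

Lemma special_tag_neq x y : special x -> special y -> p x = p y -> x != y ->
  child_tag x != child_tag y.
Proof.
move=> /andP[_ sx] /andP[_ sy] pxy; rewrite /child_tag -pxy; rewrite -pxy in sy.
move: (p x) sx sy => r sx sy.
case/orP: sx => /eqP ->; case/orP: sy => /eqP ->; rewrite ?eqxx // => n.
  by rewrite (negbTE n).
by rewrite eq_sym in n; rewrite (negbTE n).
Qed.

Lemma parent_edge x : 0 < d x -> [set x; p x] \in edges g.
Proof. by move=> dx; apply/edgesP; exists (p x), x; rewrite setUC h_sub ?h_parent. Qed.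

Lemma parent_edge_inj x y : 0 < d x -> 0 < d y -> [set x; p x] = [set y; p y] -> x = y.
Proof.
move=> dx dy /set2_eq_cases[[]//|[Ex Ey]].
by have := d_parent dx; have := d_parent dy; rewrite -Ex Ey; lia.
Qed.

Lemma tree_colouring_parent x :
  0 < d x -> tree_colouring [set x; p x] = Some (inord (kappa x)).
Proof.
move=> dx; rewrite /tree_colouring; case: pickP => [y /andP[dy /eqP E]|/(_ x)].
  by rewrite (parent_edge_inj dy dx (esym E)).
by rewrite dx eqxx.
Qed.

Lemma tree_colouring_Some e k : tree_colouring e = Some k ->
  exists2 x, 0 < d x & e = [set x; p x] /\ k = inord (kappa x).
Proof. by rewrite /tree_colouring; case: pickP => // x /andP[dx /eqP ->] [<-]; exists x. Qed.

Lemma satisfied_by_parent u v x0 : 0 < d x0 -> u \in [set x0; p x0] ->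
  [set x0; p x0] != [set u; v] ->
  (forall x, 0 < d x -> x != x0 -> (x \in [set u; v]) || (p x \in [set u; v]) ->
     kappa x != kappa x0) ->
  satisfied g tree_colouring [set u; v].
Proof.
move=> dx0 ux0 neq kappa_neq; exists (inord (kappa x0)), [set x0; p x0].
  rewrite !inE neq parent_edge //=; apply/set0Pn; exists u.
  by rewrite inE ux0 set21.
split=> [|b]; first exact: tree_colouring_parent.
rewrite !inE => /andP[nex /andP[_ /set0Pn[w /setIP[wx wuv]]]].
case/tree_colouring_Some=> x dx [Ex /(congr1 val)]; subst.
rewrite /= !inordK ?kappa_lt // => /eqP; apply/negP; rewrite eq_sym.
apply: kappa_neq => //.
  by apply: contraNneq nex => ->.
by case/set2P: wx => <-; rewrite wuv ?orbT.
Qed.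

Lemma satisfied_at_root u v : d u = 0 -> u != v -> (d v = 0 -> m u != m v) ->
  satisfied g tree_colouring [set u; v].
Proof.
move=> du nuv roots_m.
(* Use the chosen child of [u] whose tag differs from that of [v], if [v] is chosen. *)
pose b := ~~ (special v && child_tag v).
have [sx0 tag0] := special_root_child b du; have [dx0 px0] := root_children b du.
move: (s b u) sx0 tag0 dx0 px0 => x0 sx0 tag0 dx0 px0.
apply: (satisfied_by_parent dx0); first by rewrite px0 set22.
  rewrite px0; apply/negP=> /eqP/set2_eq_cases[[_ E]|[E _]].
    by rewrite E eqxx in nuv.
  by move: tag0; rewrite /b -E sx0; case: (child_tag x0).
move=> x dx nxx0; rewrite !inE => /orP[/orP[]|/orP[]] /eqP E.
- by move: dx; rewrite E du.
- apply: (kappa_neq_special sx0) => sx.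
  by rewrite tag0 /b -E sx; case: (child_tag x).
- by apply: (kappa_neq_special sx0) => sx; rewrite special_tag_neq // E px0.
have [dv|dv] := posnP (d v).
  apply: (kappa_neq_special sx0) => _.
  by rewrite E px0 [m v == _]eq_sym roots_m ?orbT.
by apply: kappa_ordinary_special; rewrite // not_special_child // E.
Qed.

Lemma satisfied_at_special u v : special u -> 0 < d v -> u != v ->
  (special v -> p u != p v -> m u != m v) -> satisfied g tree_colouring [set u; v].
Proof.
move=> su dv nuv siblings_m; have du : 0 < d u by rewrite special_depth.
have dpu : d (p u) = 0 by have := d_parent du; rewrite special_depth //; lia.
apply: (satisfied_by_parent du (set21 _ _)).
  apply/negP=> /eqP/set2_eq_cases[[_ E]|[E _]]; first by move: dv; rewrite -E dpu.
  by rewrite E eqxx in nuv.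
move=> x dx nxu; rewrite !inE (negbTE nxu) /= => /or3P[] /eqP E.
- subst x; apply: (kappa_neq_special su) => sv.
  have [puv|npuv] := eqVneq (p v) (p u); first by rewrite special_tag_neq.
  by rewrite [m v == _]eq_sym siblings_m ?orbT // eq_sym.
- by apply: kappa_ordinary_special; rewrite // not_special_child // E.
- by apply: kappa_ordinary_special; rewrite // not_special_child // E.
Qed.

Lemma satisfied_at_ordinary u v :
  0 < d u -> 0 < d v -> ~~ special u -> ~~ special v ->
  (d u %% 3 = d v %% 3 /\ m u != m v) \/ d v %% 3 = (d u).+1 %% 3 ->
  satisfied g tree_colouring [set u; v].
Proof.
move=> du dv su sv layers; have dpu := d_parent du.
apply: (satisfied_by_parent du (set21 _ _)).
  apply/negP=> /eqP/set2_eq_cases[[_ E]|[_ E]].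
    by rewrite E in dpu; case: layers => [[]|]; lia.
  by rewrite E in dpu; lia.
move=> x dx nxu; rewrite !inE (negbTE nxu) /= (kappa_ordinary su) => /or3P[] /eqP E.
- subst x; rewrite (kappa_ordinary sv).
  by case: layers => [[]|]; case: (m u); case: (m v) => //=; lia.
- have sx : ~~ special x by rewrite not_special_child // E.
  rewrite (kappa_ordinary sx) (d_parent dx) E.
  by case: (m u); case: (m x); lia.
- have sx : ~~ special x by rewrite not_special_child // E.
  rewrite (kappa_ordinary sx) (d_parent dx) E.
  by case: layers => [[]|]; case: (m u); case: (m x); lia.
Qed.

Lemma tree_colouring_satisfied u v : g u v -> h u v \/ m u != m v ->
  satisfied g tree_colouring [set u; v].
Proof.
move=> guv huv; have nuv : u != v by apply: contraTneq guv => ->; rewrite g_irr.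
have [du|du] := posnP (d u).
  by apply: satisfied_at_root => // dv; case: huv => // /h_step; lia.
have [dv|dv] := posnP (d v).
  rewrite setUC; apply: satisfied_at_root; rewrite 1?eq_sym // => du0.
  by move: du; rewrite du0.
have [su|su] := boolP (special u).
  apply: satisfied_at_special => // sv _; case: huv => // /h_step.
  by rewrite !special_depth //; lia.
have [sv|sv] := boolP (special v).
  rewrite setUC; apply: satisfied_at_special; rewrite 1?eq_sym // => su'.
  by rewrite su' in su.
have mod_gap : h u v -> d u %% 3 <> d v %% 3 by move/h_step; lia.
have [E|[E|E]] : d u %% 3 = d v %% 3 \/ d v %% 3 = (d u).+1 %% 3 \/
    d u %% 3 = (d v).+1 %% 3 by lia.
- apply: satisfied_at_ordinary => //; left; split=> //.
  by case: huv => // /mod_gap.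
- by apply: satisfied_at_ordinary => //; right.
- by rewrite setUC; apply: satisfied_at_ordinary => //; right.
Qed.

End LayeredColouring.

Theorem mainTheorem8 (T : finType) (g : rel T) :
  simple_graph g ->
  (exists H M : {set {set T}},
     [/\ H :|: M = edges g, [disjoint H & M],
         bipartite_edges H, spanning_no_K2_component H & matching M]) ->
  exists c : pcolouring T 16, forall a, a \in edges g -> satisfied g c a.
Proof.
move=> [g_sym g_irr] [H [M [HM _ [a H_bip] H_span M_match]]].
have H_sub : {subset H <= edges g} by move=> e He; rewrite -HM inE He.
have [m m_sep] := matching_two_colouring M_match.
exists (tree_colouring m (depth H) (parent H) (child H)) => _ /edgesP[u [v [guv ->]]].
apply: (tree_colouring_satisfied g_irr (adjH_sub g_sym H_sub) (depth_step H_bip)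
  (@parent_adj _ H) (@depth_parent _ H) (anchor_children g_sym g_irr H_sub H_bip H_span)
  (anchor_children_neq g_sym g_irr H_sub H_span) guv).
have : [set u; v] \in H :|: M by rewrite HM; apply/edgesP; exists u, v.
case/setUP=> [Huv|Muv]; [left|right] => //.
by apply: m_sep Muv _; apply: contraTneq guv => ->; rewrite g_irr.
Qed.
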